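(* Let $\alpha,\beta$ be positive integers and let $\mathcal{C}\subseteq\mathbb{F}_q^\alpha\times\mathcal{R}^\beta$ be an $\mathbb{F}_q\mathcal{R}$-skew cyclic code of length $(\alpha,\beta)$. Suppose that the order $|\langle\theta\rangle|$ of $\theta$ divides $\beta$. Then the dual code $\mathcal{C}^\perp$ is also an $\mathbb{F}_q\mathcal{R}$-skew cyclic code of length $(\alpha,\beta)$.
   Context: Let $p$ be a prime, $q=p^m$, $\mathbb{F}_q$ the finite field with $q$ elements, and $\mathcal{R}=\mathbb{F}_q[u]/\langle u^2-u\rangle=\mathbb{F}_q+u\mathbb{F}_q$ (so $u^2=u$). Fix an integer $i$ and let $\Theta$ be the automorphism of $\mathbb{F}_q$ given by $\Theta(a)=a^{p^i}$, and $\theta$ the automorphism of $\mathcal{R}$ given by $\theta(a+ub)=a^{p^i}+ub^{p^i}$ ($a,b\in\mathbb{F}_q$). Let $\eta:\mathcal{R}\to\mathbb{F}_q$, $\eta(a+ub)=a$. The set $\mathbb{F}_q^\alpha\times\mathcal{R}^\beta$ is an $\mathcal{R}$-module under $s*(x_0,\dots,x_{\alpha-1},y_0,\dots,y_{\beta-1})=(\eta(s)x_0,\dots,\eta(s)x_{\alpha-1},sy_0,\dots,sy_{\beta-1})$. An $\mathbb{F}_q\mathcal{R}$-skew cyclic code of length $(\alpha,\beta)$ is an $\mathcal{R}$-submodule $\mathcal{C}$ of $\mathbb{F}_q^\alpha\times\mathcal{R}^\beta$ such that for every $c=(x_0,\dots,x_{\alpha-1},y_0,\dots,y_{\beta-1})\in\mathcal{C}$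 also $\sigma(c)=(\Theta(x_{\alpha-1}),\Theta(x_0),\dots,\Theta(x_{\alpha-2}),\theta(y_{\beta-1}),\theta(y_0),\dots,\theta(y_{\beta-2}))\in\mathcal{C}$. For $l=(x_0,\dots,x_{\alpha-1},y_0,\dots,y_{\beta-1})$ and $l'=(x'_0,\dots,x'_{\alpha-1},y'_0,\dots,y'_{\beta-1})$ in $\mathbb{F}_q^\alpha\times\mathcal{R}^\beta$ the inner product is $l\cdot l'=u\sum_{i=0}^{\alpha-1}x_ix'_i+\sum_{j=0}^{\beta-1}y_jy'_j\in\mathcal{R}$, and $\mathcal{C}^\perp=\{l'\in\mathbb{F}_q^\alpha\times\mathcal{R}^\beta : l\cdot l'=0 \text{ for all } l\in\mathcal{C}\}$. *)

From HB Require Import structures.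
From mathcomp Require Import all_boot all_order all_algebra.
Set Implicit Arguments. Unset Strict Implicit. Unset Printing Implicit Defensive.
Import GRing.Theory.
Local Open Scope ring_scope.

(* The ring R = F_q[u]/<u^2-u> = F_q + u F_q.  An element a + u b is
   represented by the pair (a, b).  Since u^2 = u,
   (a + ub)(c + ud) = ac + u(ad + bc + bd). *)
Definition Rq (F : fieldType) := (F * F)%type.

Definition Rzero (F : fieldType) : Rq F := (0, 0).
Definition Ru (F : fieldType) : Rq F := (0, 1).
Definition Radd (F : fieldType) (r s : Rq F) : Rq F := (r.1 + s.1, r.2 + s.2).
Definition Rmul (F : fieldType) (r s : Rq F) : Rq F :=
  (r.1 * s.1, r.1 * s.2 + r.2 * s.1 + r.2 * s.2).

Definition Reta (F : fieldType) (r : Rq F) : F := r.1.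

Definition Theta (F : fieldType) (p i : nat) (a : F) : F := a ^+ (p ^ i).
Definition theta (F : fieldType) (p i : nat) (r : Rq F) : Rq F :=
  (Theta p i r.1, Theta p i r.2).

Definition is_order_theta (F : fieldType) (p i k : nat) : Prop :=
  (0 < k)%N /\ (forall r : Rq F, iter k (theta p i) r = r) /\
  (forall j, (0 < j < k)%N -> exists r : Rq F, iter j (theta p i) r <> r).

Definition amb (F : fieldType) (alpha beta : nat) :=
  ({ffun 'I_alpha -> F} * {ffun 'I_beta -> Rq F})%type.

Definition amb_zero (F : fieldType) alpha beta : amb F alpha beta :=
  ([ffun _ => 0], [ffun _ => Rzero F]).
Definition amb_add (F : fieldType) alpha beta (c d : amb F alpha beta)
  : amb F alpha beta :=
  ([ffun k => c.1 k + d.1 k], [ffun k => Radd (c.2 k) (d.2 k)]).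
Definition amb_scale (F : fieldType) alpha beta (s : Rq F) (c : amb F alpha beta)
  : amb F alpha beta :=
  ([ffun k => Reta s * c.1 k], [ffun k => Rmul s (c.2 k)]).

Definition sigma (F : fieldType) (p i : nat) alpha beta (c : amb F alpha beta)
  : amb F alpha beta :=
  ([ffun k => Theta p i (c.1 (ord_pred k))],
   [ffun k => theta p i (c.2 (ord_pred k))]).

Definition ip (F : fieldType) alpha beta (c d : amb F alpha beta) : Rq F :=
  Radd (Rmul (Ru F) (\sum_(k < alpha) c.1 k * d.1 k, 0))
       (\big[@Radd F/Rzero F]_(k < beta) Rmul (c.2 k) (d.2 k)).

Definition is_Rsubmodule (F : fieldType) alpha beta (C : amb F alpha beta -> Prop)
  : Prop :=
  C (amb_zero F alpha beta) /\
  (forall c d, C c -> C d -> C (amb_add c d)) /\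
  (forall (s : Rq F) c, C c -> C (amb_scale s c)).

Definition skew_cyclic (F : fieldType) (p i : nat) alpha beta
  (C : amb F alpha beta -> Prop) : Prop :=
  is_Rsubmodule C /\ (forall c, C c -> C (sigma p i c)).

Definition dual (F : fieldType) alpha beta (C : amb F alpha beta -> Prop)
  : amb F alpha beta -> Prop :=
  fun d => forall c, C c -> ip c d = Rzero F.

From mathcomp Require Import all_boot all_order all_algebra.
From mathcomp Require Import ring.
Set Implicit Arguments. Unset Strict Implicit. Unset Printing Implicit Defensive.
Import GRing.Theory.
Local Open Scope ring_scope.

(* The shift sigma twists the inner product by theta: ip (sigma c) (sigma d)
   = theta (ip c d), because theta is a ring automorphism and sigma shifts
   the coordinates of both arguments by the same cyclic permutation.
   Moreover sigma is an injection of the finite ambient space into itself,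
   so its inverse is one of its iterates and a sigma-closed code C satisfies
   C = sigma C.  Hence if d is orthogonal to C and c = sigma c' with c' in C,
   then ip c (sigma d) = theta (ip c' d) = 0. *)

Section FrobeniusPower.

Variables (F : fieldType) (p i : nat).
Hypothesis pcharFp : p \in [pchar F].

Lemma ThetaD (a b : F) : Theta p i (a + b) = Theta p i a + Theta p i b.
Proof.
rewrite /Theta exprDn_pchar // pnatX pnatE ?pcharFp //.
exact: pcharf_prime pcharFp.
Qed.

Lemma ThetaM (a b : F) : Theta p i (a * b) = Theta p i a * Theta p i b.
Proof. exact: exprMn. Qed.

Lemma Theta0 : Theta p i (0 : F) = 0.
Proof.
by rewrite /Theta expr0n expn_eq0 eqn0Ngt prime_gt0 ?(pcharf_prime pcharFp).
Qed.

Lemma Theta_sum n (f : 'I_n -> F) :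
  Theta p i (\sum_k f k) = \sum_k Theta p i (f k).
Proof. exact: (big_morph _ ThetaD Theta0). Qed.

Lemma Theta_inj : injective (@Theta F p i).
Proof.
move=> a b eq_ab; apply/eqP; rewrite -subr_eq0.
have : Theta p i (a - b) + Theta p i b = 0 + Theta p i b.
  by rewrite -ThetaD subrK eq_ab add0r.
by move/addIr/eqP; rewrite expf_eq0 => /andP[].
Qed.

End FrobeniusPower.

Lemma big_Radd (F : fieldType) n (f : 'I_n -> Rq F) :
  \big[@Radd F/Rzero F]_(k < n) f k = (\sum_k (f k).1, \sum_k (f k).2).
Proof. by rewrite [LHS]surjective_pairing; congr pair; apply: big_morph. Qed.

Section InnerProduct.

Variables (F : fieldType) (alpha beta : nat).
Implicit Types c d e : amb F alpha beta.

Lemma ipE c d : ip c d =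
  (\sum_k (c.2 k).1 * (d.2 k).1,
   \sum_k c.1 k * d.1 k + \sum_k (Rmul (c.2 k) (d.2 k)).2).
Proof. by rewrite /ip big_Radd /Radd /Rmul /= !mul0r !mulr0 !mul1r !add0r addr0. Qed.

Lemma ip0r c : ip c (amb_zero F alpha beta) = Rzero F.
Proof.
rewrite ipE; congr pair; first by rewrite big1 // => k _; rewrite ffunE mulr0.
by rewrite !big1 ?addr0 // => k _; rewrite ffunE /= ?mulr0 ?addr0.
Qed.

Lemma ipDr c d e : ip c (amb_add d e) = Radd (ip c d) (ip c e).
Proof.
rewrite !ipE /Radd /=; congr pair.
  by rewrite -big_split; apply: eq_bigr => k _; rewrite !ffunE /=; ring.
rewrite addrACA -!big_split; congr (_ + _); apply: eq_bigr => k _;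
  rewrite !ffunE /=; ring.
Qed.

Lemma ip_scale (s : Rq F) c d : ip c (amb_scale s d) = ip (amb_scale s c) d.
Proof.
rewrite !ipE /=; congr pair.
  by apply: eq_bigr => k _; rewrite !ffunE /=; ring.
by congr (_ + _); apply: eq_bigr => k _; rewrite !ffunE /Reta /=; ring.
Qed.

Variables (p i : nat).
Hypothesis pcharFp : p \in [pchar F].

Lemma ip_sigma c d : ip (sigma p i c) (sigma p i d) = theta p i (ip c d).
Proof.
have ThD := ThetaD i pcharFp; have ThS := Theta_sum i pcharFp.
rewrite !ipE /theta /= ThD !ThS.
rewrite [X in (_, _) = (X, _)](reindex_inj (@ord_pred_inj _)).
rewrite [X in (_, _) = (_, X + _)](reindex_inj (@ord_pred_inj _)).
rewrite [X in (_, _) = (_, _ + X)](reindex_inj (@ord_pred_inj _)) /=.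
by congr (_, _ + _); apply: eq_bigr => k _; rewrite !ffunE /= ?ThD !ThetaM.
Qed.

Lemma sigma_inj : injective (@sigma F p i alpha beta).
Proof.
move=> [c1 c2] [d1 d2] [/ffunP eq1 /ffunP eq2].
congr pair; apply/ffunP => k.
  by move: (eq1 (ordS k)); rewrite !ffunE ordSK => /Theta_inj; apply.
move: (eq2 (ordS k)); rewrite !ffunE ordSK /theta.
by case: (c2 k) (d2 k) => a b [a' b'] [/Theta_inj-> // /Theta_inj-> //].
Qed.

End InnerProduct.

Lemma dual_Rsubmodule (F : fieldType) alpha beta (C : amb F alpha beta -> Prop) :
  (forall s c, C c -> C (amb_scale s c)) -> is_Rsubmodule (dual C).
Proof.
move=> Cscale; split; first by move=> c _; apply: ip0r.
split=> [d e Cd Ce c Cc | s d Cd c Cc].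
  by rewrite ipDr Cd ?Ce // /Radd /= addr0.
by rewrite ip_scale Cd //; apply: Cscale.
Qed.

Lemma finv_closed (T : finType) (f : T -> T) (P : T -> Prop) :
  (forall x, P x -> P (f x)) -> forall x, P x -> P (finv f x).
Proof. by move=> Pf x Px; rewrite /finv; elim: _.-1 => //= n; apply: Pf. Qed.

Lemma dual_sigma_closed (F : finFieldType) p i alpha beta
    (C : amb F alpha beta -> Prop) :
  p \in [pchar F] -> (forall c, C c -> C (sigma p i c)) ->
  forall d, dual C d -> dual C (sigma p i d).
Proof.
move=> pcharFp Csigma d Cd c Cc.
rewrite -(f_finv (@sigma_inj F alpha beta p i pcharFp) c) ip_sigma //.
by rewrite Cd; [rewrite /theta /= Theta0 | apply: finv_closed].
Qed.

Theorem theorem3 (F : finFieldType) (p m i : nat)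
  (Hp : prime p) (Hchar : p \in [pchar F]) (Hcard : #|F| = (p ^ m)%N)
  (alpha beta : nat) (Ha : (0 < alpha)%N) (Hb : (0 < beta)%N)
  (C : amb F alpha beta -> Prop)
  (HC : skew_cyclic p i C)
  (Hord : forall k, is_order_theta F p i k -> (k %| beta)%N) :
  skew_cyclic p i (dual C).
Proof.
case: HC => [[_ [_ Cscale]] Csigma]; split.
- exact: dual_Rsubmodule.
- exact: dual_sigma_closed.
Qed.
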